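(* Consider the two-player, three-item all-pay auction with budgets described in the context, with symmetric valuations $v_{1j}=v_{2j}=v_j$ for $j\in\{1,2,3\}$, where $v_1\ge v_2\ge v_3$. Suppose $B_i\ge\max\{\frac{v_1+v_2+v_3}{2},v_1\}$ for all $i\in\{1,2\}$. Let $z=\frac{v_1+v_2+v_3}{2}$. Case 1: $z>v_1$. Let $A=(v_1,0,z-v_1)$, $B=(z-v_2,v_2,0)$, $C=(0,z-v_3,v_3)$, let $L_{AB},L_{BC},L_{CA}$ be the line segments with the indicated endpoints and $|AB|,|BC|,|CA|$ their lengths. Let $K=\frac{z-v_3}{z-v_2}+1+\frac{z-v_3}{z-v_1}$ and $P_{AB}=\frac1K\cdot\frac{z-v_3}{z-v_2}$, $P_{BC}=\frac1K$, $P_{CA}=\frac1K\cdot\frac{z-v_3}{z-v_1}$. For each player $i\in\{1,2\}$ let $f_i(x_{i1},x_{i2},x_{i3})$ equal $\frac{P_{AB}}{|AB|}$ on $L_{AB}$, $\frac{P_{BC}}{|BC|}$ on $L_{BC}$, and $\frac{P_{CA}}{|CA|}$ on $L_{CA}$. Then $(f_1,f_2)$ forms a Nash equilibrium. Case 2: $z\le v_1$. Let $A=(v_1,0,0)$ and $B=(0,v_2,v_3)$, and for each $i\in\{1,2\}$ let $f_i(x_{i1},x_{i2},x_{i3})=\frac{1}{|AB|}$ be the uniform density on the segment $AB$ (of length $|AB|$). Then $(f_1,f_2)$ forms a Nash equilibrium.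
   Context: Multi-item all-pay auction with budgets. Two players $i\in\{1,2\}$ ($-i$ is the opponent of $i$) and $n$ items $j\in\{1,\dots,n\}$. Player $i$ has budget $B_i\ge0$ and values item $j$ at $v_{ij}>0$. A pure strategy of player $i$ is a vector $(x_{i1},\dots,x_{in})$ with all $x_{ij}\ge0$ and $\sum_j x_{ij}\le B_i$; a mixed strategy is a probability distribution over this set. On each item $j$ the higher bid wins the item. Tie-breaking on item $j$: if $x_{1j}=x_{2j}=\min\{B_1,B_2,v_{1j},v_{2j}\}$ and $\min\{B_i,v_{ij}\}>\min\{B_{-i},v_{-ij}\}$ for some $i$, then player $i$ wins item $j$; in all other ties each player wins item $j$ with probability $\frac12$. Player $i$'s utility on item $j$ is $v_{ij}-x_{ij}$ if he wins it and $-x_{ij}$ otherwise, and his total utility is the sum over items. A Nash equilibrium is a pair of mixed strategies in which each player's strategy maximizes his expected total utility against the other's, over all mixed strategies satisfying his budget constraint. Here $n=3$. Mixed strategies are specified by densities supported on finitely many line segments in $\mathbb{R}^3$; such a density is with respect to arc length (one-dimensional length measure) on the indicated segment, so the probability of a segment is the density times its length. *)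

From HB Require Import structures.
From mathcomp Require Import all_boot all_order all_algebra.
From mathcomp Require Import all_classical all_reals all_analysis.
Set Implicit Arguments. Unset Strict Implicit. Unset Printing Implicit Defensive.
Import Order.TTheory GRing.Theory Num.Theory.
Import numFieldNormedType.Exports.
Local Open Scope classical_set_scope.
Local Open Scope ring_scope.

Section Auction.
Variable R : realType.

(* Points of R^3 (bid vectors), with the product (= Borel) sigma-algebra. *)
Definition R3 := (R * R * R)%type.

Definition mk3 (a b c : R) : R3 := (a, b, c).

(* coordinate j (j = 0,1,2 stand for items 1,2,3) *)
Definition coord (x : R3) (j : 'I_3) : R :=
  match val j with 0%N => x.1.1 | 1%N => x.1.2 | _ => x.2 end.

Definition feasible (B : R) : set R3 :=
  [set x | (forall j, 0 <= coord x j) /\ \sum_(j < 3) coord x j <= B].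

Definition win_prob (Bme Bop vme vop xme xop : R) : R :=
  if xop < xme then 1
  else if xme < xop then 0
  else
    if xme == Num.min (Num.min Bme Bop) (Num.min vme vop) then
      if Num.min Bop vop < Num.min Bme vme then 1
      else if Num.min Bme vme < Num.min Bop vop then 0
      else 2^-1
    else 2^-1.

Definition util (Bme Bop : R) (vme vop : 'I_3 -> R) (xme xop : R3) : R :=
  \sum_(j < 3)
    (win_prob Bme Bop (vme j) (vop j) (coord xme j) (coord xop j) * vme j
     - coord xme j).

Definition u1 (B1 B2 : R) (v1 v2 : 'I_3 -> R) (x1 x2 : R3) : R :=
  util B1 B2 v1 v2 x1 x2.
Definition u2 (B1 B2 : R) (v1 v2 : 'I_3 -> R) (x1 x2 : R3) : R :=
  util B2 B1 v2 v1 x2 x1.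

Definition mixed_strategy (B : R) (P : probability R3 R) : Prop :=
  P (feasible B) = 1%E.

Definition seg (A B : R3) (t : R) : R3 :=
  mk3 (A.1.1 + t * (B.1.1 - A.1.1)) (A.1.2 + t * (B.1.2 - A.1.2))
      (A.2 + t * (B.2 - A.2)).

(* A "segment strategy": a finite list of (mass, (endpoint, endpoint)); it is
   the mixed strategy whose density w.r.t. arc length is mass/|segment| on
   each listed segment, i.e. the mixture of the uniform distributions on the
   segments with the given masses. *)
Definition segE (A B : R3) (g : R3 -> \bar R) : \bar R :=
  (\int[lebesgue_measure]_(t in `[0%R, 1%R]) g (seg A B t))%E.

Definition mixE (s : seq (R * (R3 * R3))) (g : R3 -> \bar R) : \bar R :=
  (\sum_(k <- s) (k.1)%:E * segE k.2.1 k.2.2 g)%E.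

Definition seg_strategy (B : R) (s : seq (R * (R3 * R3))) : Prop :=
  (forall k, k \in s -> 0 <= k.1) /\ \sum_(k <- s) k.1 = 1 /\
  (forall k t, k \in s -> 0 <= t <= 1 -> feasible B (seg k.2.1 k.2.2 t)).

(* Expected utilities are iterated
   integrals of the bounded measurable utilities (= integrals against the
   product measure). *)
Definition nash_seg (B1 B2 : R) (v1 v2 : 'I_3 -> R)
    (f1 f2 : seq (R * (R3 * R3))) : Prop :=
  seg_strategy B1 f1 /\ seg_strategy B2 f2 /\
  (forall P : probability R3 R, mixed_strategy B1 P ->
     (\int[P]_x mixE f2 (fun y => (u1 B1 B2 v1 v2 x y)%:E)
      <= mixE f1 (fun x => mixE f2 (fun y => (u1 B1 B2 v1 v2 x y)%:E)))%E) /\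
  (forall P : probability R3 R, mixed_strategy B2 P ->
     (\int[P]_y mixE f1 (fun x => (u2 B1 B2 v1 v2 x y)%:E)
      <= mixE f2 (fun y => mixE f1 (fun x => (u2 B1 B2 v1 v2 x y)%:E)))%E).

Definition vals (a b c : R) : 'I_3 -> R := fun j => coord (mk3 a b c) j.

End Auction.

From Pilot Require Import Defs.
From HB Require Import structures.
From mathcomp Require Import all_boot all_order all_algebra.
From mathcomp Require Import all_classical all_reals all_analysis.
From mathcomp Require Import ring lra.
From mathcomp Require Import measurable_realfun.
Import Order.TTheory GRing.Theory Num.Theory.
Import numFieldNormedType.Exports.
Local Open Scope classical_set_scope.
Local Open Scope ring_scope.

(* Along a segment every coordinate is uniform between the coordinates of the
   endpoints, and the masses are chosen so that each item's bid is uniform on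
   [0, v_j]; in the triangle case every coordinate runs through a cycle
   0 -> r -> p -> 0 whose pieces all carry the same density.  Against a bid
   uniform on [0, v] (ties have probability zero) a bid s >= 0 on an item worth
   v earns min(s, v) - s <= 0, with equality on [0, v].  Utilities are additive
   over items, so every feasible deviation earns at most 0, while the strategy
   itself, supported in the box [0, v_1] x [0, v_2] x [0, v_3], earns exactly 0.
*)

(* Otherwise [coord] would resolve to the coordinate function of vector.v. *)
Local Notation coord := Defs.coord.

Section UniformMarginalEquilibria.
Variable R : realType.
Local Notation mu := (@lebesgue_measure R).
Local Notation I01 := (`[0, 1]%classic : set R).

Definition clamp (lo hi s : R) := Num.min (Num.max s lo) hi.

Lemma clamp_lo {lo hi s : R} : lo <= hi -> s <= lo -> clamp lo hi s = lo.
Proof. by move=> lohi slo; rewrite /clamp (max_r slo) (min_l lohi). Qed.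

Lemma clamp_id {lo hi s : R} : lo <= s -> s <= hi -> clamp lo hi s = s.
Proof. by move=> los shi; rewrite /clamp (max_l los) (min_l shi). Qed.

Lemma clamp_hi {lo hi s : R} : lo <= hi -> hi <= s -> clamp lo hi s = hi.
Proof.
by move=> lohi his; rewrite /clamp (max_l (le_trans lohi his)) (min_r his).
Qed.

Lemma clamp_split (p r s : R) : 0 <= p -> p <= r ->
  clamp p r s = clamp 0 r s - clamp 0 p s + p.
Proof.
move=> p0 pr; have r0 := le_trans p0 pr.
have [s0|s0] := lerP s 0.
  rewrite (clamp_lo pr (le_trans s0 p0)) (clamp_lo r0 s0) (clamp_lo p0 s0).
  by rewrite subrr add0r.
have [sp|sp] := lerP s p.
  rewrite (clamp_lo pr sp) (clamp_id (ltW s0) sp).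
  by rewrite (clamp_id (ltW s0) (le_trans sp pr)) subrr add0r.
have [sr|sr] := lerP s r.
  rewrite (clamp_id (ltW sp) sr) (clamp_id (ltW s0) sr).
  by rewrite (clamp_hi p0 (ltW sp)) subrK.
have ps : p <= s by rewrite ltW // (le_lt_trans pr sr).
by rewrite (clamp_hi pr (ltW sr)) (clamp_hi r0 (ltW sr)) (clamp_hi p0 ps) subrK.
Qed.

Lemma clamp01_rev x : 1 - clamp 0 1 x = clamp 0 1 (1 - x).
Proof.
have [x0|x0] := lerP x 0; first by rewrite clamp_lo ?clamp_hi //; lra.
have [x1|x1] := lerP x 1; first by rewrite !clamp_id //; lra.
by rewrite clamp_hi ?clamp_lo //; lra.
Qed.

Definition unif_cdf (lo hi s : R) := (clamp lo hi s - lo) / (hi - lo).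

Definition seg_cdf (a b s : R) := unif_cdf (Num.min a b) (Num.max a b) s.

Lemma clamp01_rescale (lo hi s : R) : lo < hi ->
  clamp 0 1 ((s - lo) / (hi - lo)) = unif_cdf lo hi s.
Proof.
move=> lohi; have d0 : 0 < hi - lo by rewrite subr_gt0.
rewrite /unif_cdf; have [slo|slo] := lerP s lo.
  rewrite (clamp_lo (ltW lohi) slo) subrr mul0r clamp_lo //.
  by rewrite ler_pdivrMr // mul0r; lra.
have [shi|shi] := lerP s hi.
  rewrite (clamp_id (ltW slo) shi) clamp_id //.
    by rewrite divr_ge0 //; lra.
  by rewrite ler_pdivrMr // mul1r; lra.
rewrite (clamp_hi (ltW lohi) (ltW shi)) divff ?lt0r_neq0 // clamp_hi //.
by rewrite ler_pdivlMr // mul1r; lra.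
Qed.

Lemma seg_cdfC (a b s : R) : seg_cdf a b s = seg_cdf b a s.
Proof. by rewrite /seg_cdf minC maxC. Qed.

Lemma seg_cdf_le (a b s : R) : a <= b -> seg_cdf a b s = unif_cdf a b s.
Proof. by move=> ab; rewrite /seg_cdf (min_l ab) (max_r ab). Qed.

(* The pieces [0, p] and [p, r] both get density [mp0 / p]; the long segment
   [0, r] tops it up to [1 / r]. *)
Lemma seg_cdf_cycle (p r m0r mrp mp0 s : R) : 0 < p -> p < r ->
    mp0 / p = mrp / (r - p) -> mp0 / p + m0r / r = r^-1 ->
  m0r * seg_cdf 0 r s + mrp * seg_cdf r p s + mp0 * seg_cdf p 0 s
  = unif_cdf 0 r s.
Proof.
move=> p0 pr dens_eq dens_sum.
have r0 : 0 < r := lt_trans p0 pr.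
have rp0 : r - p != 0 by rewrite subr_eq0 gt_eqF.
rewrite (seg_cdfC r p) (seg_cdfC p 0) !seg_cdf_le ?(ltW p0) ?(ltW r0) ?(ltW pr) //.
rewrite /unif_cdf (clamp_split _ _ s (ltW p0) (ltW pr)) !subr0.
have -> : mrp = mp0 / p * (r - p) by rewrite dens_eq divfK.
have -> : m0r = (r^-1 - mp0 / p) * r by rewrite -dens_sum addrC addKr divfK ?gt_eqF.
by field; rewrite rp0 !gt_eqF.
Qed.

Lemma seg_cdf_triangle {a b c S : R} (s : R) :
    0 < a -> 0 < b -> 0 < c -> S = a * b + b * c + c * a ->
  c * a / S * seg_cdf (b + c) b s + a * b / S * seg_cdf b 0 s
  + b * c / S * seg_cdf 0 (b + c) s = unif_cdf 0 (b + c) s.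
Proof.
move=> a0 b0 c0 S_def; have S0 : 0 < S by rewrite S_def; nra.
rewrite -(@seg_cdf_cycle b (b + c) (b * c / S) (c * a / S) (a * b / S) s b0).
- lra.
- by rewrite ltrDl.
- by field; rewrite addrAC subrr add0r !gt_eqF.
- by rewrite S_def; field; rewrite -S_def !gt_eqF ?addr_gt0.
Qed.

Lemma lebesgue_itv01 : mu I01 = 1%E.
Proof. by rewrite lebesgue_measure_itv /= lte01 oppr0 adde0. Qed.

Lemma lebesgue_itv01_lt (c : R) : mu (`]-oo, c[ `&` I01) = (clamp 0 1 c)%:E.
Proof.
rewrite -set_itvI lebesgue_measure_itv /= meetEtotal lte_fin oppr0 adde0.
have [c0|c0] := lerP c 0; first by rewrite lt_min ltNge c0 clamp_lo.
have [c1|c1] := lerP c 1; first by rewrite ifT // clamp_id // ltW.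
by rewrite ifT // clamp_hi // ltW.
Qed.

Lemma lebesgue_itv01_gt (c : R) : mu (`]c, +oo[ `&` I01) = (1 - clamp 0 1 c)%:E.
Proof.
rewrite -set_itvI lebesgue_measure_itv /= joinEtotal.
have [c0|c0] := lerP c 0; first by rewrite lte01 oppr0 adde0 clamp_lo // subr0.
have [c1|c1] := ltrP c 1; first by rewrite lte_fin c1 clamp_id // ltW.
by rewrite lte_fin ltNge c1 clamp_hi // subrr.
Qed.

Lemma lebesgue_seg_lt (a b s : R) : a != b ->
  mu ([set t | a + t * (b - a) < s] `&` I01) = (seg_cdf a b s)%:E.
Proof.
rewrite /seg_cdf; case: ltgtP => // [ab|ba] _.
  have d0 : 0 < b - a by rewrite subr_gt0.
  have -> : [set t | a + t * (b - a) < s] = `]-oo, (s - a) / (b - a)[%classic.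
    by apply/seteqP; split => t /=; rewrite in_itv /= ltr_pdivlMr //; lra.
  by rewrite lebesgue_itv01_lt clamp01_rescale.
have d0 : 0 < a - b by rewrite subr_gt0.
have -> : [set t | a + t * (b - a) < s] = `](a - s) / (a - b), +oo[%classic.
  by apply/seteqP; split => t /=; rewrite in_itv /= andbT ltr_pdivrMr //; lra.
rewrite lebesgue_itv01_gt clamp01_rev -clamp01_rescale //.
by congr (_%:E); congr clamp; field; rewrite lt0r_neq0.
Qed.

Lemma seg_tie_set1 (a b s : R) : a != b ->
  [set t | a + t * (b - a) == s] = [set (s - a) / (b - a)].
Proof.
rewrite eq_sym -subr_eq0 => ba0; apply/seteqP; split => t /=.
  by move=> /eqP <-; rewrite addrC addKr mulfK.
by move=> ->; rewrite divfK // addrC subrK.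
Qed.

Lemma measurable_ltr_cst (f : R -> R) (s : R) : measurable_fun setT f ->
  measurable [set t | f t < s].
Proof.
move=> mf; rewrite -[X in measurable X]setTI.
exact: (measurable_fun_ltr mf (measurable_cst s)).
Qed.

Lemma indic_predE (T : Type) (P : pred T) x : \1_[set x | P x] x = (P x)%:R :> R.
Proof.
rewrite indicE; case: (boolP (P x)) => Px; first by rewrite mem_set.
by rewrite memNset //; apply/negP.
Qed.

Lemma integrable_itv01 (f : R -> R) (M : R) : measurable_fun I01 f ->
  (forall t, `|f t| <= M) -> mu.-integrable I01 (EFin \o f).
Proof.
move=> mf fM; apply: measurable_bounded_integrable => //.
  by have := lebesgue_itv01; rewrite /= => ->; rewrite ltry.
rewrite /bounded_near; near=> N => t _ /=; apply: le_trans (fM t) _.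
by near: N; apply: nbhs_pinfty_ge; exact: num_real.
Unshelve. all: end_near.
Qed.

Lemma integrable_itv01_indic (k : R) (E : set R) : measurable E ->
  mu.-integrable I01 (fun t => (k * \1_E t)%:E).
Proof.
move=> mE; apply: (@integrable_itv01 _ `|k|).
  exact/measurable_funM/measurable_indic.
move=> t; rewrite normrM ler_piMr // indicE.
by case: (_ \in _); rewrite ?normr0 ?normr1.
Qed.

Lemma integral_itv01_indic (k : R) (E : set R) : measurable E ->
  (\int[mu]_(t in I01) (k * \1_E t)%:E = k%:E * mu (E `&` I01))%E.
Proof.
move=> mE; under eq_integral do rewrite EFinM.
rewrite integralZl ?integral_indic ?(measurable_itv `[0, 1]) //.
move: (@integrable_itv01_indic 1 E mE).
by under [X in _.-integrable _ X -> _]eq_fun do rewrite mul1r.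
Qed.

Lemma win_prob_sym (Bme Bop v s y : R) : v <= Bme -> v <= Bop ->
  win_prob Bme Bop v v s y = (y < s)%R%:R + 2^-1 * (y == s)%:R.
Proof.
move=> vBme vBop; rewrite /win_prob (min_r vBme) (min_r vBop) ltxx.
by case: ltrgtP => _; rewrite ?mulr0 ?addr0 ?add0r ?mulr1 //; case: ifP.
Qed.

Lemma seg_payoffE (Bme Bop v a b s t : R) : v <= Bme -> v <= Bop ->
  (win_prob Bme Bop v v s (a + t * (b - a)) * v - s)%:E =
  ((v * \1_[set t | a + t * (b - a) < s] t)%:E
   + (v / 2 * \1_[set t | a + t * (b - a) == s] t)%:E
   + (- s * \1_setT t)%:E)%E.
Proof.
move=> vBme vBop.
by rewrite win_prob_sym // !indic_predE indicT -!EFinD /=; congr EFin; ring.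
Qed.

Section SegmentItem.
Variables (Bme Bop v a b s : R).
Hypotheses (ab : a != b) (vBme : v <= Bme) (vBop : v <= Bop).

Let measurable_seg_lt : measurable [set t | a + t * (b - a) < s].
Proof.
apply: measurable_ltr_cst; apply: measurable_funD => //; exact: measurable_funM.
Qed.

Let measurable_seg_tie : measurable [set t | a + t * (b - a) == s].
Proof. by rewrite seg_tie_set1 //; exact: measurable_set1. Qed.

Lemma integrable_seg_payoff : mu.-integrable I01
  (fun t => (win_prob Bme Bop v v s (a + t * (b - a)) * v - s)%:E).
Proof.
have m01 : measurable I01 by exact: measurable_itv.
under [X in _.-integrable _ X]eq_fun do rewrite seg_payoffE //.
by do 2 ?apply: integrableD => //; exact: integrable_itv01_indic.
Qed.

Lemma integral_seg_payoff :
  (\int[mu]_(t in I01) (win_prob Bme Bop v v s (a + t * (b - a)) * v - s)%:E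
   = (seg_cdf a b s * v - s)%:E)%E.
Proof.
have m01 : measurable I01 by exact: measurable_itv.
under eq_integral do rewrite seg_payoffE //.
rewrite !integralD //;
  try by do ?apply: integrableD => //; exact: integrable_itv01_indic.
rewrite !integral_itv01_indic // lebesgue_seg_lt // seg_tie_set1 // setTI.
have -> : mu ([set (s - a) / (b - a)] `&` I01) = 0%E.
  apply/eqP; rewrite -measure_le0.
  by rewrite -[leRHS](lebesgue_measure_set1 ((s - a) / (b - a))) measureIl.
have -> : mu I01 = 1%E by exact: lebesgue_itv01.
by rewrite mule0 adde0 mule1 -EFinM -EFinD mulrC.
Qed.

End SegmentItem.

Lemma coord_seg (A B : R3 R) t j :
  coord (seg A B t) j = coord A j + t * (coord B j - coord A j).
Proof. by case: j => [[|[|j]] ?]. Qed.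

Lemma segE_util (Bme Bop : R) (v : 'I_3 -> R) (x A B : R3 R) :
    (forall j, coord A j != coord B j) ->
    (forall j, v j <= Bme) -> (forall j, v j <= Bop) ->
  segE A B (fun y => (util Bme Bop v v x y)%:E) =
  (\sum_(j < 3) (seg_cdf (coord A j) (coord B j) (coord x j) * v j
                 - coord x j))%:E.
Proof.
move=> AB vBme vBop; rewrite /segE /util.
under eq_integral => t _.
  rewrite -sumEFin; under eq_bigr => j _ do rewrite coord_seg.
  over.
rewrite integral_sum; first last.
- by move=> j; exact: integrable_seg_payoff.
- exact: measurable_itv.
by rewrite -sumEFin; apply: eq_bigr => j _; exact: integral_seg_payoff.
Qed.

Definition in_box (v : 'I_3 -> R) (x : R3 R) := forall j, 0 <= coord x j <= v j.

Definition uniform_marginals (v : 'I_3 -> R) (f : seq (R * (R3 R * R3 R))) :=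
  forall j s, \sum_(k <- f) k.1 * seg_cdf (coord k.2.1 j) (coord k.2.2 j) s
              = unif_cdf 0 (v j) s.

Definition uniform_payoff (v : 'I_3 -> R) (x : R3 R) :=
  \sum_(j < 3) (clamp 0 (v j) (coord x j) - coord x j).

Lemma feasible_seg (B : R) (A C : R3 R) t : 0 <= t <= 1 ->
  feasible B A -> feasible B C -> feasible B (seg A C t).
Proof.
move=> /andP[t0 t1] [A0 AB] [C0 CB]; split=> [j|].
  by rewrite coord_seg; move: (A0 j) (C0 j); nra.
under eq_bigr do rewrite coord_seg.
rewrite big_split /= -mulr_sumr sumrB; nra.
Qed.

Lemma in_box_seg (v : 'I_3 -> R) (A C : R3 R) t : 0 <= t <= 1 ->
  in_box v A -> in_box v C -> in_box v (seg A C t).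
Proof.
move=> /andP[t0 t1] Av Cv j; rewrite coord_seg.
by case/andP: (Av j) => ? ?; case/andP: (Cv j) => ? ?; apply/andP; split; nra.
Qed.

Lemma seg_strategy_endpoints (B : R) (f : seq (R * (R3 R * R3 R))) :
    (forall k, k \in f -> 0 <= k.1) -> \sum_(k <- f) k.1 = 1 ->
    (forall k, k \in f -> feasible B k.2.1 /\ feasible B k.2.2) ->
  seg_strategy B f.
Proof.
move=> f0 f1 fB; split => //; split => // k t kf t01.
by case: (fB k kf) => ? ?; exact: feasible_seg.
Qed.

Lemma measurable_coord j : measurable_fun setT (fun x : R3 R => coord x j).
Proof.
case: j => [[|[|j]] ?] /=.
- exact: measurableT_comp measurable_fst measurable_fst.
- exact: measurableT_comp measurable_snd measurable_fst.
- exact: measurable_snd.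
Qed.

Lemma measurable_feasible (B : R) : measurable (feasible B).
Proof.
have mle (f g : R3 R -> R) : measurable_fun setT f -> measurable_fun setT g ->
    measurable [set x | f x <= g x].
  by move=> mf mg; rewrite -[X in measurable X]setTI; exact: measurable_fun_ler.
have -> : feasible B = \bigcap_(j in setT) [set x | 0 <= coord x j]
                       `&` [set x | \sum_(j < 3) coord x j <= B].
  by apply/seteqP; split => x /= [x0 xB]; split => // j; [move=> _ |]; exact: x0.
apply: measurableI.
  apply: fin_bigcap_measurable => // j _.
  by apply: (mle (cst 0)) => //; exact: measurable_coord.
apply: (mle _ (cst B)) => //.
by apply: measurable_sum => j; exact: measurable_coord.
Qed.

Lemma measurable_uniform_payoff v : measurable_fun setT (uniform_payoff v).
Proof.
apply: measurable_sum => j; apply: measurable_funB (measurable_coord j).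
apply: measurable_minr => //.
by apply: measurable_maxr => //; exact: measurable_coord.
Qed.

Lemma uniform_payoff_le0 v x :
  (forall j, 0 <= coord x j) -> uniform_payoff v x <= 0.
Proof.
move=> x0; apply: sumr_le0 => j _.
by rewrite subr_le0 /clamp (max_l (x0 j)) ge_min lexx.
Qed.

Lemma uniform_payoff_eq0 v x : in_box v x -> uniform_payoff v x = 0.
Proof.
move=> xv; rewrite /uniform_payoff big1 // => j _.
by case/andP: (xv j) => ? ?; rewrite clamp_id ?subrr.
Qed.

(* [uniform_payoff] need not be integrable; its positive part vanishes on the
   feasible set, which has full measure. *)
Lemma integral_uniform_payoff_le0 (B : R) (v : 'I_3 -> R)
    (P : probability (R3 R) R) :
  mixed_strategy B P -> (\int[P]_x (uniform_payoff v x)%:E <= 0)%E.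
Proof.
move=> PB; have mF := measurable_feasible B.
have PnF : P (~` feasible B) = 0%E by rewrite probability_setC // PB subee.
have mU : measurable_fun setT (EFin \o uniform_payoff v).
  by apply/measurable_EFinP; exact: measurable_uniform_payoff.
rewrite integralE (ge0_negligible_integral _ _ _ _ PnF) //; last 2 first.
- exact: measurableC.
- exact: measurable_funepos.
rewrite integral0_eq ?sub0e ?oppe_le0.
  by apply: integral_ge0 => x _; exact: funeneg_ge0.
move=> x [_ /= /contrapT [x0 _]].
by rewrite funeposE max_r // lee_fin; exact: uniform_payoff_le0.
Qed.

Section UniformMarginals.
Variables (v : 'I_3 -> R) (f : seq (R * (R3 R * R3 R))).
Hypotheses (v_gt0 : forall j, 0 < v j) (f_mass1 : \sum_(k <- f) k.1 = 1)
  (f_nondeg : forall k, k \in f -> forall j, coord k.2.1 j != coord k.2.2 j)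
  (f_box : forall k, k \in f -> in_box v k.2.1 /\ in_box v k.2.2)
  (f_unif : uniform_marginals v f).

Lemma mixE_util (Bme Bop : R) x :
    (forall j, v j <= Bme) -> (forall j, v j <= Bop) ->
  mixE f (fun y => (util Bme Bop v v x y)%:E) = (uniform_payoff v x)%:E.
Proof.
move=> vBme vBop; rewrite /mixE (eq_big_seq (fun k => (k.1 *
   \sum_(j < 3) (seg_cdf (coord k.2.1 j) (coord k.2.2 j) (coord x j) * v j
                 - coord x j))%:E)); last first.
  by move=> k kf; rewrite segE_util ?EFinM //; exact: f_nondeg.
rewrite sumEFin; congr EFin.
under eq_bigr do rewrite mulr_sumr.
rewrite exchange_big /uniform_payoff; apply: eq_bigr => j _.
under eq_bigr do rewrite mulrBr mulrA.
rewrite sumrB -!mulr_suml f_unif f_mass1 mul1r /unif_cdf !subr0 divfK //.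
exact: lt0r_neq0.
Qed.

Lemma mixE_uniform_payoff : mixE f (fun x => (uniform_payoff v x)%:E) = 0%E.
Proof.
rewrite /mixE big_seq big1 // => k kf.
rewrite /segE integral0_eq ?mule0 // => t t01.
by case: (f_box k kf) => ? ?; rewrite uniform_payoff_eq0 //; exact: in_box_seg.
Qed.

Lemma nash_seg_uniform_marginals (B1 B2 : R) :
    (forall j, v j <= B1) -> (forall j, v j <= B2) ->
    seg_strategy B1 f -> seg_strategy B2 f ->
  nash_seg B1 B2 v v f f.
Proof.
move=> vB1 vB2 f1 f2; split=> //; split=> //; split=> P PB.
- have -> : (fun x => mixE f (fun y => (u1 B1 B2 v v x y)%:E)) =
            (fun x => (uniform_payoff v x)%:E).
    by apply/funext => x; exact: mixE_util.
  by rewrite mixE_uniform_payoff; exact: integral_uniform_payoff_le0 PB.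
- have -> : (fun y => mixE f (fun x => (u2 B1 B2 v v x y)%:E)) =
            (fun y => (uniform_payoff v y)%:E).
    by apply/funext => y; exact: mixE_util.
  by rewrite mixE_uniform_payoff; exact: integral_uniform_payoff_le0 PB.
Qed.

End UniformMarginals.

Lemma forall_vals (P : R -> Prop) (v1 v2 v3 : R) :
  P v1 -> P v2 -> P v3 -> forall j, P (vals v1 v2 v3 j).
Proof. by move=> ? ? ?; case=> [[|[|[|//]]] ?]. Qed.

Lemma feasible_mk3 (B p q r : R) : 0 <= p -> 0 <= q -> 0 <= r ->
  p + q + r <= B -> feasible B (mk3 p q r).
Proof.
move=> p0 q0 r0 pqrB; split; first by case=> [[|[|[|//]]] ?].
by rewrite !big_ord_recr big_ord0 /= add0r.
Qed.

Lemma in_box_mk3 (v1 v2 v3 p q r : R) :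
    0 <= p <= v1 -> 0 <= q <= v2 -> 0 <= r <= v3 ->
  in_box (vals v1 v2 v3) (mk3 p q r).
Proof. by move=> ? ? ?; case=> [[|[|[|//]]] ?]. Qed.

Lemma coord_mk3_neq (p q r p' q' r' : R) : p != p' -> q != q' -> r != r' ->
  forall j, coord (mk3 p q r) j != coord (mk3 p' q' r') j.
Proof. by move=> ? ? ?; case=> [[|[|[|//]]] ?]. Qed.

Lemma nash_single_segment (v1 v2 v3 B1 B2 : R) :
    0 < v2 -> 0 < v3 -> v2 + v3 <= v1 -> v1 <= B1 -> v1 <= B2 ->
  let f := [:: (1, (mk3 v1 0 0, mk3 0 v2 v3))] in
  nash_seg B1 B2 (vals v1 v2 v3) (vals v1 v2 v3) f f.
Proof.
move=> v20 v30 v1v23 v1B1 v1B2 f.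
have v10 : 0 < v1 by lra.
have mass1 : \sum_(k <- f) k.1 = 1 by rewrite big_seq1.
have endpoints B : v1 <= B -> seg_strategy B f.
  move=> v1B; apply: seg_strategy_endpoints => // k;
    rewrite mem_seq1 => /eqP -> //=.
  by split; apply: feasible_mk3; lra.
apply: nash_seg_uniform_marginals (endpoints _ v1B1) (endpoints _ v1B2) => //.
- exact: (forall_vals (fun x => 0 < x)).
- move=> k; rewrite mem_seq1 => /eqP -> /=.
  by apply: coord_mk3_neq; apply/eqP; lra.
- move=> k; rewrite mem_seq1 => /eqP -> /=.
  by split; apply: in_box_mk3; lra.
- case=> [[|[|[|//]]] ?] s; rewrite big_seq1 mul1r /vals /=.
  + by rewrite seg_cdfC seg_cdf_le // ltW.
  + by rewrite seg_cdf_le // ltW.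
  + by rewrite seg_cdf_le // ltW.
- by apply: (forall_vals (fun x => x <= B1)); lra.
- by apply: (forall_vals (fun x => x <= B2)); lra.
Qed.

Lemma nash_cyclic_triangle (v1 v2 v3 a b c B1 B2 : R) :
    0 < a -> 0 < b -> 0 < c -> v1 = b + c -> v2 = c + a -> v3 = a + b ->
    a + b + c <= B1 -> a + b + c <= B2 ->
  let K := c / b + 1 + c / a in
  let f := [:: (K^-1 * (c / b), (mk3 v1 0 a, mk3 b v2 0));
               (K^-1, (mk3 b v2 0, mk3 0 c v3));
               (K^-1 * (c / a), (mk3 0 c v3, mk3 v1 0 a))] in
  nash_seg B1 B2 (vals v1 v2 v3) (vals v1 v2 v3) f f.
Proof.
move=> a0 b0 c0 -> -> -> abcB1 abcB2 K f.
pose S := a * b + b * c + c * a.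
have S0 : 0 < S by rewrite /S; nra.
(* Over [S] the masses are cyclic in (a, b, c), so the three items are
   rotations of [seg_cdf_triangle]. *)
have mAB : K^-1 * (c / b) = c * a / S by rewrite /K /S; field; rewrite !gt_eqF.
have mCA : K^-1 * (c / a) = b * c / S by rewrite /K /S; field; rewrite !gt_eqF.
have mBC : K^-1 = a * b / S by rewrite /K /S; field; rewrite !gt_eqF.
rewrite {}/f mAB mCA mBC {K mAB mCA mBC}; set f := [:: _; _; _].
have mass1 : \sum_(k <- f) k.1 = 1.
  by rewrite !big_cons big_nil /= addr0 /S; field; rewrite gt_eqF.
have endpoints B : a + b + c <= B -> seg_strategy B f.
  move=> abcB; apply: seg_strategy_endpoints => // k.
    by rewrite !inE => /or3P[]/eqP -> /=; apply: ltW; rewrite ?divr_gt0 ?mulr_gt0.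
  by rewrite !inE => /or3P[]/eqP -> /=; split; apply: feasible_mk3; lra.
apply: nash_seg_uniform_marginals (endpoints _ abcB1) (endpoints _ abcB2) => //.
- by apply: (forall_vals (fun x => 0 < x)); rewrite addr_gt0.
- move=> k; rewrite !inE => /or3P[]/eqP -> /=;
    by apply: coord_mk3_neq; apply/eqP; lra.
- move=> k; rewrite !inE => /or3P[]/eqP -> /=;
    by split; apply: in_box_mk3; lra.
- case=> [[|[|[|//]]] ?] s; rewrite !big_cons big_nil /vals /=.
  + by have := seg_cdf_triangle s a0 b0 c0 (erefl S); lra.
  + have S_bca : S = b * c + c * a + a * b by rewrite /S; ring.
    by have := seg_cdf_triangle s b0 c0 a0 S_bca; lra.
  + have S_cab : S = c * a + a * b + b * c by rewrite /S; ring.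
    by have := seg_cdf_triangle s c0 a0 b0 S_cab; lra.
- by apply: (forall_vals (fun x => x <= B1)); lra.
- by apply: (forall_vals (fun x => x <= B2)); lra.
Qed.

End UniformMarginalEquilibria.

Theorem theorem6 (R : realType) (w1 w2 w3 B1 B2 : R) :
  0 < w3 -> w3 <= w2 -> w2 <= w1 ->
  let z := (w1 + w2 + w3) / 2 in
  Num.max z w1 <= B1 -> Num.max z w1 <= B2 ->
  (w1 < z ->
     let A := mk3 w1 0 (z - w1) in
     let B := mk3 (z - w2) w2 0 in
     let C := mk3 0 (z - w3) w3 in
     let K := (z - w3) / (z - w2) + 1 + (z - w3) / (z - w1) in
     let PAB := K^-1 * ((z - w3) / (z - w2)) in
     let PBC := K^-1 in
     let PCA := K^-1 * ((z - w3) / (z - w1)) in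
     let f := [:: (PAB, (A, B)); (PBC, (B, C)); (PCA, (C, A))] in
     nash_seg B1 B2 (vals w1 w2 w3) (vals w1 w2 w3) f f) /\
  (z <= w1 ->
     let A := mk3 w1 0 0 in
     let B := mk3 0 w2 w3 in
     let f := [:: (1, (A, B))] in
     nash_seg B1 B2 (vals w1 w2 w3) (vals w1 w2 w3) f f).
Proof.
move=> w30 w32 w21 z; rewrite !ge_max => /andP[zB1 w1B1] /andP[zB2 w1B2].
have zE : z = (w1 + w2 + w3) / 2 by [].
split=> [w1z A B C K PAB PBC PCA f | zw1 A B f].
  by apply: (@nash_cyclic_triangle _ w1 w2 w3 (z - w1) (z - w2) (z - w3)); lra.
by apply: nash_single_segment; lra.
Qed.
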